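(* Consider either the FMM or the MMM with a mutant fitness distribution $\mu$ satisfying $G(x)>0$ for all $x>0$, and $\beta\in(0,1)$. For $t\in\mathbb N_0$ let $W_t$ be the fitness of the fittest of all mutants produced in generation $t$ (in the FMM this includes the mutants that die instantly), with $W_t=0$ if there is no mutant in generation $t$. Then almost surely on the event of survival the sequence $(W_t)_{t\ge0}$ is unbounded.
   Context: Models: Fix a probability distribution $\mu$ on $(0,\infty)$ and $\beta\in(0,1)$. The population evolves in discrete generations $t=0,1,2,\dots$; generation $0$ consists of a single individual with fitness $f>0$. Each individual of generation $t$ independently produces a Poisson distributed number of offspring whose mean equals its fitness. Each offspring independently, with probability $1-\beta$, inherits its parent's fitness and joins generation $t+1$; otherwise (probability $\beta$) it is a mutant. In the fittest mutant model (FMM), every mutant gets an independent fitness sampled from $\mu$, and only the fittest mutant of generation $t+1$ (if any mutant exists) is added to generation $t+1$; all other mutants die instantly. In the multiple mutant model (MMM), every mutant gets an independent fitness sampled from $\mu$ and all mutants are added to generation $t+1$. $X(t)$ is the number of individuals in generation $t$; survival is the event $\{X(t)\neq0 \text{ for all } t\}$. Write $G(x):=\mu((x,\infty))$. *)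

From HB Require Import structures.
From mathcomp Require Import all_boot all_order all_algebra.
From mathcomp Require Import all_classical all_reals all_analysis.

Set Implicit Arguments.
Unset Strict Implicit.
Unset Printing Implicit Defensive.

Import Order.TTheory GRing.Theory Num.Theory.
Import numFieldNormedType.Exports.

Local Open Scope classical_set_scope.
Local Open Scope ring_scope.

Inductive model := FMM | MMM.

Section poisson_sampling.
Context {R : realType}.

(* pmf of Poisson(r), r >= 0 (with 0^0 = 1, so Poisson(0) = delta_0) *)
Definition pois_pmf (r : R) (k : nat) : R := expR (- r) * r ^+ k / k`!%:R.

Definition pois_cdf (r : R) (n : nat) : R := \sum_(k < n.+1) pois_pmf r k.

(* generalized inverse of the cdf: least n with u <= F(n);
   if u is a Uniform[0,1] variable, pois_quantile r u ~ Poisson(r). *)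
Definition pois_quantile (r u : R) : nat :=
  match pselect (exists n, u <= pois_cdf r n) with
  | left h => ex_minn h
  | right _ => 0%N
  end.
End poisson_sampling.

Section process.
Context {R : realType} {T : Type}.
(* Primitive randomness:
   U t i   : uniform variable driving the number of offspring of individual
             i (position i in the list) of generation t;
   B t i k : uniform variable; offspring k of that individual is a mutant
             iff B t i k < beta (probability beta);
   Y t i k : fitness (law mu) of offspring k of that individual if it is
             a mutant. *)
Variables (U : nat -> nat -> T -> R) (B Y : nat -> nat -> nat -> T -> R).
Variables (m : model) (beta f : R) (w : T).

Definition noff (t i : nat) (fit : R) : nat := pois_quantile fit (U t i w).

Definition is_mutant (t i k : nat) : bool := B t i k w < beta.

Definition mutants_of (t i : nat) (fit : R) : seq R :=
  [seq Y t i k w | k <- iota 0 (noff t i fit) & is_mutant t i k].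

Definition nclones (t i : nat) (fit : R) : nat :=
  count (fun k => ~~ is_mutant t i k) (iota 0 (noff t i fit)).

Definition indexed (pop : seq R) : seq (nat * R) := zip (iota 0 (size pop)) pop.

(* all mutants produced by generation t (they belong to generation t+1) *)
Definition all_mutants (t : nat) (pop : seq R) : seq R :=
  flatten [seq mutants_of t p.1 p.2 | p <- indexed pop].

Definition all_clones (t : nat) (pop : seq R) : seq R :=
  flatten [seq nseq (nclones t p.1 p.2) p.2 | p <- indexed pop].

Definition maxs (s : seq R) : R := foldr Num.max 0 s.

Definition step (t : nat) (pop : seq R) : seq R :=
  match m with
  | MMM => all_clones t pop ++ all_mutants t pop
  | FMM => all_clones t pop ++
           (if all_mutants t pop is [::] then [::] else [:: maxs (all_mutants t pop)])
  end.

(* generation t, as the list of fitnesses of its individuals *)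
Fixpoint gen (t : nat) : seq R :=
  match t with
  | 0%N => [:: f]
  | t'.+1 => step t' (gen t')
  end.

Definition popsize (t : nat) : nat := size (gen t).

Definition survives : Prop := forall t, popsize t <> 0%N.

(* Generation 0 consists of a single non-mutant individual, so W 0 = 0. *)
Definition W (t : nat) : R :=
  match t with
  | 0%N => 0
  | t'.+1 => maxs (all_mutants t' (gen t'))
  end.
End process.

Section primitives.
Context {R : realType} {d : measure_display} {T : measurableType d}.

Definition mutually_independent (I : eqType) (P : probability T R)
    (X : I -> T -> R) : Prop :=
  (forall i, measurable_fun setT (X i)) /\
  forall (s : seq I) (A : I -> set R), uniq s -> (forall i, measurable (A i)) ->
    P (\bigcap_(i in [set` s]) (X i @^-1` A i)) =
    (\big[*%E/1%E]_(i <- s) P (X i @^-1` A i))%E.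

Definition prim (U : nat -> nat -> T -> R) (B Y : nat -> nat -> nat -> T -> R) :
    ((nat * nat) + (nat * nat * nat) + (nat * nat * nat))%type -> T -> R :=
  fun j => match j with
           | inl (inl (t, i)) => U t i
           | inl (inr (t, i, k)) => B t i k
           | inr (t, i, k) => Y t i k
           end.

Definition model_primitives (P : probability T R) (mu : probability R R)
    (U : nat -> nat -> T -> R) (B Y : nat -> nat -> nat -> T -> R) : Prop :=
  mutually_independent P (prim U B Y) /\
  (forall t i A, measurable A -> P (U t i @^-1` A) = uniform_prob (@ltr01 R) A) /\
  (forall t i k A, measurable A -> P (B t i k @^-1` A) = uniform_prob (@ltr01 R) A) /\
  (forall t i k A, measurable A -> P (Y t i k @^-1` A) = mu A).
End primitives.

(* Fix a level K > 0 and let A_t be the event that the population is alive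
   in generations 0..t and that W_s <= K for all s <= t.  On A_(t+1),
   generation t has a first individual j with at least one offspring.  The
   first offspring of j is a mutant of fitness > K with probability
   q = beta * mu(]K, +oo[) > 0, and this happens independently of A_t and of
   the choice of j, which only depend on the randomness used up to the
   offspring numbers of generation t; if it happens, W_(t+1) > K.  Hence
   P(A_(t+1)) <= (1 - q) P(A_t), the intersection of all A_t is null, and a
   union over integer levels K gives the theorem. *)

From Pilot Require Import Defs.
From HB Require Import structures.
From mathcomp Require Import all_boot all_order all_algebra.
From mathcomp Require Import all_classical all_reals all_analysis.
From mathcomp Require Import measurable_realfun ring.
Import Order.TTheory GRing.Theory Num.Theory.
Local Open Scope classical_set_scope.
Local Open Scope ring_scope.

Set Implicit Arguments.
Unset Strict Implicit.
Unset Printing Implicit Defensive.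

Section measurable_seqfun.
Context {R : realType} {d : measure_display} {T : measurableType d}.

Definition measurable_natfun (N : T -> nat) := forall n, measurable [set w | N w = n].

Definition measurable_predfun (b : T -> bool) := measurable [set w | b w].

Definition measurable_seqfun (S : T -> seq R) :=
  measurable_natfun (fun w => size (S w)) /\
  forall i, measurable_fun setT (fun w => nth 0 (S w) i).

Lemma measurable_natfun_preimage N (Q : nat -> Prop) :
  measurable_natfun N -> measurable [set w | Q (N w)].
Proof.
move=> mN.
have -> : [set w | Q (N w)] = \bigcup_(n in Q) [set w | N w = n].
  by apply/seteqP; split=> [w Qw|w [n Qn /= ->]]; [exists (N w)|].
by apply: bigcup_measurable => n _; exact: mN.
Qed.

Lemma measurable_natfun_cst n : measurable_natfun (fun _ => n).
Proof.
move=> k; case: (eqVneq n k) => [->|nk].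
  by rewrite [X in measurable X](_ : _ = setT) //; apply/seteqP; split.
rewrite [X in measurable X](_ : _ = set0) //.
by apply/seteqP; split=> // w /= /eqP; rewrite (negbTE nk).
Qed.

Lemma measurable_fun_preimage (g : T -> R) A :
  measurable_fun setT g -> measurable A -> measurable (g @^-1` A).
Proof. by move=> mg mA; have := mg measurableT A mA; rewrite setTI. Qed.

Lemma measurable_fun_piecewise N (g : T -> R) (h : nat -> T -> R) :
  measurable_natfun N -> (forall n, measurable_fun setT (h n)) ->
  (forall w, g w = h (N w) w) -> measurable_fun setT g.
Proof.
move=> mN mh e _ A mA; rewrite setTI.
have -> : g @^-1` A = \bigcup_n ([set w | N w = n] `&` h n @^-1` A).
  apply/seteqP; split=> [w /= gA|w [n _ /= [Nw hA]]]; last by rewrite e Nw.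
  by exists (N w) => //=; split => //; rewrite -e.
apply: bigcupT_measurable => n; apply: measurableI => //.
exact: measurable_fun_preimage.
Qed.

Lemma measurable_natfun_piecewise N (g : T -> nat) (h : nat -> T -> nat) :
  measurable_natfun N -> (forall n, measurable_natfun (h n)) ->
  (forall w, g w = h (N w) w) -> measurable_natfun g.
Proof.
move=> mN mh e k.
have -> : [set w | g w = k] =
    \bigcup_n ([set w | N w = n] `&` [set w | h n w = k]).
  apply/seteqP; split=> [w /= gA|w [n _ /= [Nw hA]]]; last by rewrite e Nw.
  by exists (N w) => //=; split => //; rewrite -e.
by apply: bigcupT_measurable => n; apply: measurableI; [exact: mN|exact: mh].
Qed.

Lemma measurable_seqfun_piecewise N (g : T -> seq R) (h : nat -> T -> seq R) :
  measurable_natfun N -> (forall n, measurable_seqfun (h n)) ->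
  (forall w, g w = h (N w) w) -> measurable_seqfun g.
Proof.
move=> mN mh e; split.
  apply: (measurable_natfun_piecewise (h := fun n w => size (h n w))) mN _ _.
    by move=> n; case: (mh n).
  by move=> w; rewrite e.
move=> i.
apply: (measurable_fun_piecewise (h := fun n w => nth 0 (h n w) i)) mN _ _.
  by move=> n; case: (mh n) => _; apply.
by move=> w; rewrite e.
Qed.

Lemma measurable_predfun_not b :
  measurable_predfun b -> measurable_predfun (fun w => ~~ b w).
Proof.
move=> mb; rewrite /measurable_predfun.
rewrite [X in measurable X](_ : _ = ~` [set w | b w]); first exact: measurableC.
by apply/seteqP; split=> w /=; case: (b w).
Qed.

Lemma measurable_natfun_nat_of_bool b :
  measurable_predfun b -> measurable_natfun (fun w => nat_of_bool (b w)).
Proof.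
move=> mb [|[|n]].
- rewrite [X in measurable X](_ : _ = [set w | ~~ b w]).
    exact: measurable_predfun_not.
  by apply/seteqP; split=> w /=; case: (b w).
- rewrite [X in measurable X](_ : _ = [set w | b w]) //.
  by apply/seteqP; split=> w /=; case: (b w).
- rewrite [X in measurable X](_ : _ = set0) //.
  by apply/seteqP; split=> w //=; case: (b w).
Qed.

Lemma measurable_predfun_natfun N (Q : pred nat) :
  measurable_natfun N -> measurable_predfun (fun w => Q (N w)).
Proof. by move=> mN; exact: (measurable_natfun_preimage (fun n => Q n)). Qed.

Lemma measurable_natfun_comp2 N1 N2 (h : nat -> nat -> nat) :
  measurable_natfun N1 -> measurable_natfun N2 ->
  measurable_natfun (fun w => h (N1 w) (N2 w)).
Proof.
move=> m1 m2.
apply: (measurable_natfun_piecewise (h := fun n w => h n (N2 w))) m1 _ _ => //.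
by move=> n k; exact: (measurable_natfun_preimage (fun p => h n p = k)).
Qed.

Lemma measurable_predfun_lt (g1 g2 : T -> R) :
  measurable_fun setT g1 -> measurable_fun setT g2 ->
  measurable_predfun (fun w => g1 w < g2 w).
Proof.
move=> m1 m2; have h := measurable_fun_ltr m1 m2.
have := h measurableT [set true] ltac:(by []).
by rewrite setTI; congr measurable; apply/seteqP; split.
Qed.

Lemma measurable_predfun_le (g1 g2 : T -> R) :
  measurable_fun setT g1 -> measurable_fun setT g2 ->
  measurable_predfun (fun w => g1 w <= g2 w).
Proof.
move=> m1 m2; have h := measurable_fun_ler m1 m2.
have := h measurableT [set true] ltac:(by []).
by rewrite setTI; congr measurable; apply/seteqP; split.
Qed.

Lemma measurable_fun_if b (g1 g2 : T -> R) : measurable_predfun b ->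
  measurable_fun setT g1 -> measurable_fun setT g2 ->
  measurable_fun setT (fun w => if b w then g1 w else g2 w).
Proof.
move=> mb m1 m2; apply: (measurable_fun_piecewise (N := fun w => nat_of_bool (b w))
  (h := fun n w => if n == 1%N then g1 w else g2 w)).
- exact: measurable_natfun_nat_of_bool.
- by move=> n; case: (n == 1%N).
- by move=> w; case: (b w).
Qed.

Lemma measurable_natfun_if b (g1 g2 : T -> nat) : measurable_predfun b ->
  measurable_natfun g1 -> measurable_natfun g2 ->
  measurable_natfun (fun w => if b w then g1 w else g2 w).
Proof.
move=> mb m1 m2; apply: (measurable_natfun_piecewise (N := fun w => nat_of_bool (b w))
  (h := fun n w => if n == 1%N then g1 w else g2 w)).
- exact: measurable_natfun_nat_of_bool.
- by move=> n; case: (n == 1%N).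
- by move=> w; case: (b w).
Qed.

Lemma measurable_seqfun_if b (g1 g2 : T -> seq R) : measurable_predfun b ->
  measurable_seqfun g1 -> measurable_seqfun g2 ->
  measurable_seqfun (fun w => if b w then g1 w else g2 w).
Proof.
move=> mb [s1 n1] [s2 n2]; split.
  rewrite (_ : (fun w => _) = fun w => if b w then size (g1 w) else size (g2 w)).
    exact: measurable_natfun_if.
  by apply/funext => w; case: (b w).
move=> i.
rewrite (_ : (fun w => _) =
  fun w => if b w then nth 0 (g1 w) i else nth 0 (g2 w) i).
  exact: measurable_fun_if.
by apply/funext => w; case: (b w).
Qed.

Lemma measurable_seqfun_nil : measurable_seqfun (fun _ => [::]).
Proof.
split=> [|i]; first exact: measurable_natfun_cst.
under eq_fun do rewrite nth_nil; exact: measurable_cst.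
Qed.

Lemma measurable_seqfun_seq1 (g : T -> R) :
  measurable_fun setT g -> measurable_seqfun (fun w => [:: g w]).
Proof.
by move=> mg; split=> [|[|i]] //; exact: measurable_natfun_cst.
Qed.

Lemma measurable_seqfun_cat g1 g2 : measurable_seqfun g1 -> measurable_seqfun g2 ->
  measurable_seqfun (fun w => g1 w ++ g2 w).
Proof.
move=> [s1 n1] [s2 n2]; split.
  by under eq_fun do rewrite size_cat; exact: measurable_natfun_comp2.
move=> i; under eq_fun do rewrite nth_cat.
apply: measurable_fun_if => //.
  exact: (measurable_predfun_natfun (fun n => i < n)%N).
exact: (measurable_fun_piecewise (N := fun w => size (g1 w))
  (h := fun n w => nth 0 (g2 w) (i - n))).
Qed.

Lemma measurable_seqfun_nseq N (g : T -> R) : measurable_natfun N ->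
  measurable_fun setT g -> measurable_seqfun (fun w => nseq (N w) (g w)).
Proof.
move=> mN mg; split; first by under eq_fun do rewrite size_nseq.
move=> i; under eq_fun do rewrite nth_nseq.
apply: measurable_fun_if => //.
exact: (measurable_predfun_natfun (fun n => i < n)%N).
Qed.

Lemma indexedE (s : seq R) :
  Defs.indexed s = [seq (i, nth 0 s i) | i <- iota 0 (size s)].
Proof.
apply: (@eq_from_nth _ (0%N, 0)).
  by rewrite /Defs.indexed size_zip size_iota size_map size_iota minnn.
move=> i; rewrite /Defs.indexed size_zip size_iota minnn => lti.
by rewrite nth_zip ?size_iota // (nth_map 0%N) ?size_iota // nth_iota.
Qed.

Lemma measurable_seqfun_flatten (pop : T -> seq R) (h : nat -> R -> T -> seq R) :
  measurable_seqfun pop ->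
  (forall i, measurable_seqfun (fun w => h i (nth 0 (pop w) i) w)) ->
  measurable_seqfun (fun w => flatten [seq h p.1 p.2 w | p <- Defs.indexed (pop w)]).
Proof.
move=> [mpop _] mh.
apply: (measurable_seqfun_piecewise (N := fun w => size (pop w))
  (h := fun n w => flatten [seq h i (nth 0 (pop w) i) w | i <- iota 0 n])) => //.
  elim=> [|n IH]; first exact: measurable_seqfun_nil.
  rewrite -addn1 (_ : (fun w => _) = fun w =>
    flatten [seq h i (nth 0 (pop w) i) w | i <- iota 0 n] ++
    h n (nth 0 (pop w) n) w); first exact: measurable_seqfun_cat.
  by apply/funext => w; rewrite iotaD map_cat flatten_cat /= cats0.
by move=> w; rewrite indexedE -map_comp.
Qed.

Lemma measurable_seqfun_filter_map n (y : nat -> T -> R) (b : nat -> T -> bool) :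
  (forall k, measurable_fun setT (y k)) -> (forall k, measurable_predfun (b k)) ->
  measurable_seqfun (fun w => [seq y k w | k <- iota 0 n & b k w]).
Proof.
move=> my mb; elim: n => [|n IH]; first exact: measurable_seqfun_nil.
rewrite -addn1 (_ : (fun w => _) = fun w =>
  [seq y k w | k <- iota 0 n & b k w] ++ if b n w then [:: y n w] else [::]).
  apply: measurable_seqfun_cat => //; apply: measurable_seqfun_if => //.
    exact: measurable_seqfun_seq1.
  exact: measurable_seqfun_nil.
by apply/funext => w; rewrite iotaD filter_cat map_cat /=; case: (b n w).
Qed.

Lemma measurable_natfun_count n (b : nat -> T -> bool) :
  (forall k, measurable_predfun (b k)) ->
  measurable_natfun (fun w => count (fun k => b k w) (iota 0 n)).
Proof.
move=> mb; elim: n => [|n IH]; first exact: measurable_natfun_cst.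
rewrite -addn1 (_ : (fun w => _) = fun w =>
  (count (fun k => b k w) (iota 0 n) + nat_of_bool (b n w))%N).
  exact: (measurable_natfun_comp2 addn IH (measurable_natfun_nat_of_bool (mb n))).
by apply/funext => w; rewrite iotaD count_cat /= addn0.
Qed.

Lemma measurable_maxs (S : T -> seq R) :
  measurable_seqfun S -> measurable_fun setT (fun w => maxs (S w)).
Proof.
move=> [mS mnth].
apply: (measurable_fun_piecewise (N := fun w => size (S w))
  (h := fun n w => foldr Num.max 0 [seq nth 0 (S w) i | i <- iota 0 n])) => //.
  move=> n; elim: n 0%N => [|n IH] k /=; first exact: measurable_cst.
  exact: (measurable_maxr (mnth k) (IH k.+1)).
by move=> w; rewrite /maxs -{1}(mkseq_nth 0 (S w)).
Qed.

Lemma measurable_pois_cdf (r : T -> R) n :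
  measurable_fun setT r -> measurable_fun setT (fun w => pois_cdf (r w) n).
Proof.
move=> mr; rewrite /pois_cdf; elim: n.+1 => [|k IH].
  under eq_fun do rewrite big_ord0; exact: measurable_cst.
under eq_fun do rewrite big_ord_recr /=.
apply: measurable_funD => //; rewrite /pois_pmf.
apply: measurable_funM; last exact: measurable_cst.
apply: measurable_funM; last exact: measurable_funX.
by apply: measurableT_comp; [exact: measurable_expR|exact: measurable_funN].
Qed.

(* The second case is the junk value of [pois_quantile] when [u] exceeds
   every value of the cdf. *)
Lemma pois_quantileP (r u : R) n : pois_quantile r u = n <->
  (u <= pois_cdf r n /\ forall k, (k < n)%N -> pois_cdf r k < u) \/
  (n = 0%N /\ forall k, pois_cdf r k < u).
Proof.
rewrite /pois_quantile; case: pselect => [h|h].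
  case: ex_minnP => m um minm; split.
    move=> <-; left; split => // k km; rewrite ltNge; apply/negP => uk.
    by have := minm _ uk; rewrite leqNgt km.
  case=> [[un nk]|[n0 nk]].
    apply/eqP; rewrite eqn_leq (minm _ un) /= leqNgt; apply/negP => mn.
    by have := nk _ mn; rewrite ltNge um.
  by have := nk m; rewrite ltNge um.
split.
  move=> <-; right; split => // k; rewrite ltNge; apply/negP => uk.
  by apply: h; exists k.
by case=> [[un _]|[-> //]]; exfalso; apply: h; exists n.
Qed.

Lemma measurable_natfun_pois_quantile (r u : T -> R) :
  measurable_fun setT r -> measurable_fun setT u ->
  measurable_natfun (fun w => pois_quantile (r w) (u w)).
Proof.
move=> mr mu n.
have mlt k : measurable [set w | pois_cdf (r w) k < u w].
  exact: measurable_predfun_lt (measurable_pois_cdf k mr) mu.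
have -> : [set w | pois_quantile (r w) (u w) = n] =
    ([set w | u w <= pois_cdf (r w) n] `&`
      \bigcap_k (if (k < n)%N then [set w | pois_cdf (r w) k < u w] else setT)) `|`
    (if n == 0%N then \bigcap_k [set w | pois_cdf (r w) k < u w] else set0).
  apply/seteqP; split => w /=.
    move/pois_quantileP => [[un nk]|[n0 nk]].
      by left; split => // k _ /=; case: ifP => // kn; exact: nk.
    by right; rewrite n0 /= => k _; exact: nk.
  move=> [[un nk]|].
    apply/pois_quantileP; left; split => // k kn.
    by have := nk k I; rewrite kn.
  by case: eqP => // -> nk; apply/pois_quantileP; right; split => // k; exact: nk.
apply: measurableU.
  apply: measurableI; first exact: measurable_predfun_le mu (measurable_pois_cdf n mr).
  by apply: bigcapT_measurable => k; case: ifP.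
by case: eqP => _ //; exact: bigcapT_measurable.
Qed.

End measurable_seqfun.

Section measurable_process.
Context {R : realType} {d : measure_display} {T : measurableType d}.
Variables (U : nat -> nat -> T -> R) (B Y : nat -> nat -> nat -> T -> R).
Variables (m : model) (beta f : R).

Definition measurable_until (t : nat) :=
  (forall s i, (s < t)%N -> measurable_fun setT (U s i)) /\
  (forall s i k, (s < t)%N ->
     measurable_fun setT (B s i k) /\ measurable_fun setT (Y s i k)).

Lemma measurable_until_pred t : measurable_until t.+1 -> measurable_until t.
Proof.
by case=> mU mBY; split=> [s i st|s i k st]; [apply: mU|apply: mBY]; exact: ltnW.
Qed.

Lemma measurable_natfun_noff t i (fit : T -> R) :
  measurable_fun setT (U t i) -> measurable_fun setT fit ->
  measurable_natfun (fun w => noff U w t i (fit w)).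
Proof. by move=> mU mf; exact: measurable_natfun_pois_quantile. Qed.

Lemma measurable_seqfun_mutants_of t i (fit : T -> R) :
  measurable_fun setT (U t i) ->
  (forall k, measurable_fun setT (B t i k) /\ measurable_fun setT (Y t i k)) ->
  measurable_fun setT fit ->
  measurable_seqfun (fun w => mutants_of U B Y beta w t i (fit w)).
Proof.
move=> mU mBY mf.
apply: (measurable_seqfun_piecewise (N := fun w => noff U w t i (fit w))
  (h := fun n w => [seq Y t i k w | k <- iota 0 n & B t i k w < beta])) => //.
  exact: measurable_natfun_noff.
move=> n; apply: measurable_seqfun_filter_map => k; first by case: (mBY k).
by apply: measurable_predfun_lt; [case: (mBY k)|exact: measurable_cst].
Qed.

Lemma measurable_natfun_nclones t i (fit : T -> R) :
  measurable_fun setT (U t i) -> (forall k, measurable_fun setT (B t i k)) ->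
  measurable_fun setT fit ->
  measurable_natfun (fun w => nclones U B beta w t i (fit w)).
Proof.
move=> mU mB mf.
apply: (measurable_natfun_piecewise (N := fun w => noff U w t i (fit w))
  (h := fun n w => count (fun k => ~~ (B t i k w < beta)) (iota 0 n))) => //.
  exact: measurable_natfun_noff.
move=> n; apply: measurable_natfun_count => k; apply: measurable_predfun_not.
by apply: measurable_predfun_lt; [exact: mB|exact: measurable_cst].
Qed.

Lemma measurable_seqfun_all_mutants t (pop : T -> seq R) : measurable_seqfun pop ->
  (forall i, measurable_fun setT (U t i)) ->
  (forall i k, measurable_fun setT (B t i k) /\ measurable_fun setT (Y t i k)) ->
  measurable_seqfun (fun w => all_mutants U B Y beta w t (pop w)).
Proof.
move=> mpop mU mBY.
apply: (measurable_seqfun_flatten (h := fun i x w => mutants_of U B Y beta w t i x)) => // i.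
by apply: measurable_seqfun_mutants_of => //; case: mpop.
Qed.

Lemma measurable_seqfun_all_clones t (pop : T -> seq R) : measurable_seqfun pop ->
  (forall i, measurable_fun setT (U t i)) ->
  (forall i k, measurable_fun setT (B t i k)) ->
  measurable_seqfun (fun w => all_clones U B beta w t (pop w)).
Proof.
move=> mpop mU mB.
apply: (measurable_seqfun_flatten (h := fun i x w => nseq (nclones U B beta w t i x) x)) => // i.
have mi : measurable_fun setT (fun w => nth 0 (pop w) i) by case: mpop.
by apply: measurable_seqfun_nseq => //; exact: measurable_natfun_nclones.
Qed.

Lemma measurable_seqfun_step t (pop : T -> seq R) : measurable_seqfun pop ->
  (forall i, measurable_fun setT (U t i)) ->
  (forall i k, measurable_fun setT (B t i k) /\ measurable_fun setT (Y t i k)) ->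
  measurable_seqfun (fun w => step U B Y m beta w t (pop w)).
Proof.
move=> mpop mU mBY.
have mmut := measurable_seqfun_all_mutants mpop mU mBY.
have mclo : measurable_seqfun (fun w => all_clones U B beta w t (pop w)).
  by apply: measurable_seqfun_all_clones => // i k; case: (mBY i k).
rewrite /step; case: m; last exact: measurable_seqfun_cat.
apply: measurable_seqfun_cat => //.
rewrite (_ : (fun w => _) = fun w =>
  if size (all_mutants U B Y beta w t (pop w)) == 0%N then [::]
  else [:: maxs (all_mutants U B Y beta w t (pop w))]); last first.
  by apply/funext => w; case: (all_mutants _ _ _ _ _ _ _).
apply: measurable_seqfun_if; last 2 first.
- exact: measurable_seqfun_nil.
- exact/measurable_seqfun_seq1/measurable_maxs.
by apply: (measurable_predfun_natfun (fun n => n == 0%N)); case: mmut.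
Qed.

Lemma measurable_seqfun_gen t : measurable_until t ->
  measurable_seqfun (fun w => gen U B Y m beta f w t).
Proof.
elim: t => [|t IH] mt /=; first exact/measurable_seqfun_seq1/measurable_cst.
have [mU mBY] := mt.
apply: measurable_seqfun_step; first exact/IH/measurable_until_pred.
- by move=> i; exact: mU.
- by move=> i k; exact: mBY.
Qed.

Lemma measurable_W t : measurable_until t ->
  measurable_fun setT (fun w => W U B Y m beta f w t).
Proof.
case: t => [|t] mt /=; first exact: measurable_cst.
have [mU mBY] := mt.
apply/measurable_maxs/measurable_seqfun_all_mutants.
- exact/measurable_seqfun_gen/measurable_until_pred.
- by move=> i; exact: mU.
- by move=> i k; exact: mBY.
Qed.

End measurable_process.

Section independent_events.
Context {R : realType} {d : measure_display} {T : measurableType d}.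
Variable P : probability T R.

Lemma probability_fineK (A : set T) : measurable A -> P A = (fine (P A))%:E.
Proof. by move=> mA; rewrite fineK // fin_num_measure. Qed.

Lemma indep_setC (S E : set T) : measurable S -> measurable E ->
  P (S `&` E) = (P S * P E)%E -> P (~` S `&` E) = (P (~` S) * P E)%E.
Proof.
move=> mS mE indSE.
have -> : ~` S `&` E = E `\` (E `&` S).
  apply/seteqP; split => x /= [h1 h2]; split => //.
    by case.
  by move=> Sx; apply: h2.
have fE : (P E < +oo)%E by rewrite probability_fineK // ltry.
have -> : P (E `\` (E `&` S)) = (P E - P (S `&` E))%E.
  by rewrite measureD ?setIA ?setIid 1?setIC //; exact: measurableI.
rewrite indSE probability_setC //.
rewrite (probability_fineK mS) (probability_fineK mE) -EFinM -!EFinB -EFinM.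
by congr EFin; ring.
Qed.

Lemma indep_bigcup (F : (set T)^nat) (E : set T) : (forall n, measurable (F n)) ->
  measurable E -> trivIset setT F ->
  (forall n, P (F n `&` E) = (P (F n) * P E)%E) ->
  P (\bigcup_k F k `&` E) = (P (\bigcup_k F k) * P E)%E.
Proof.
move=> mF mE tF indFE.
have -> : P (\bigcup_k F k `&` E) =
    (\sum_(0 <= k <oo | k \in [set: nat]) ((fine (P E))%:E * P (F k)))%E.
  rewrite setI_bigcupl measure_bigcup //; last 2 first.
  - by move=> n _; exact: measurableI.
  - exact: trivIset_setIr.
  apply: eq_eseriesr => n _; apply: eq_trans (indFE n) _.
  by rewrite [in LHS](probability_fineK mE) muleC.
by rewrite nneseriesZl // -measure_bigcup // -(probability_fineK mE) muleC.
Qed.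

End independent_events.

Section cylinder_independence.
Context {R : realType} {d : measure_display} {T : measurableType d}.
Variables (P : probability T R) (I : eqType) (X : I -> T -> R).
Hypothesis indX : mutually_independent P X.

Definition cylinder (s : seq I) (A : I -> set R) : set T :=
  \bigcap_(i in [set` s]) (X i @^-1` A i).

(* The cylinders with base indices in [J]: a pi-system generating the
   sigma-algebra of the variables [X i], [i \in J]. *)
Definition cylinders (J : pred I) : set (set T) :=
  [set E | exists s A, [/\ uniq s, all J s, (forall i, measurable (A i)) &
                           E = cylinder s A]].

Lemma in_cylinder s A x : cylinder s A x <-> (forall i, i \in s -> A i (X i x)).
Proof. by split => [h i iS|h i /= iS]; exact: h. Qed.

Lemma cylinder_nil A : cylinder [::] A = setT.
Proof. by apply/seteqP; split => x // _; apply/in_cylinder => i; rewrite in_nil. Qed.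

Lemma cylinder_cons a s A : cylinder (a :: s) A = X a @^-1` A a `&` cylinder s A.
Proof.
apply/seteqP; split => x.
  move/in_cylinder => h; split; first by apply: h; rewrite inE eqxx.
  by apply/in_cylinder => i iS; apply: h; rewrite inE iS orbT.
move=> [xa /in_cylinder xs]; apply/in_cylinder => i.
by rewrite inE => /orP[/eqP->//|]; exact: xs.
Qed.

Lemma measurable_cylinder s A : (forall i, measurable (A i)) ->
  measurable (cylinder s A).
Proof.
move=> mA; elim: s => [|a s IH]; first by rewrite cylinder_nil.
rewrite cylinder_cons; apply: measurableI => //.
by apply: measurable_fun_preimage => //; case: indX.
Qed.

Lemma sigma_cylinders_sub J : <<s cylinders J >> `<=` measurable.
Proof.
apply: smallest_sub; first exact: sigma_algebra_measurable.
by move=> E [s [A [_ _ mA ->]]]; exact: measurable_cylinder.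
Qed.

Lemma cylinders_setI_closed J : setI_closed (cylinders J).
Proof.
move=> E1 E2 [s1 [A1 [u1 J1 m1 ->]]] [s2 [A2 [u2 J2 m2 ->]]].
exists (undup (s1 ++ s2)), (fun i => (if i \in s1 then A1 i else setT) `&`
                                     (if i \in s2 then A2 i else setT)); split.
- exact: undup_uniq.
- apply/allP => i; rewrite mem_undup mem_cat => /orP[] ?.
    by move/allP: J1; apply.
  by move/allP: J2; apply.
- by move=> i; apply: measurableI; case: ifP.
apply/seteqP; split => x.
  move=> [/in_cylinder h1 /in_cylinder h2]; apply/in_cylinder => i _.
  by split; case: ifP => // ?; [exact: h1|exact: h2].
move/in_cylinder => h; split; apply/in_cylinder => i iS.
  by have [] := h i; [rewrite mem_undup mem_cat iS|rewrite iS].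
by have [] := h i; [rewrite mem_undup mem_cat iS orbT|rewrite iS].
Qed.

Lemma probability_cylinder s A : uniq s -> (forall i, measurable (A i)) ->
  P (cylinder s A) = (\big[*%E/1%E]_(i <- s) P (X i @^-1` A i))%E.
Proof. by move=> us mA; case: indX => _; apply. Qed.

(* By Dynkin's pi-lambda theorem, independence of cylinders over disjoint
   index sets extends to the generated sigma-algebra on one side. *)
Lemma sigma_cylinders_indep J s0 A0 : uniq s0 -> all (predC J) s0 ->
  (forall i, measurable (A0 i)) -> forall D, <<s cylinders J >> D ->
  P (D `&` cylinder s0 A0) = (P D * P (cylinder s0 A0))%E.
Proof.
move=> u0 J0 m0.
set E := cylinder s0 A0.
have mE : measurable E by exact: measurable_cylinder.
have := @dynkin_induction _ (g_sigma_algebraType (cylinders J)) (cylinders J)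
  (fun D => P (D `&` E) = (P D * P E)%E) erefl (@cylinders_setI_closed J).
apply.
- by rewrite setTI probability_setT mul1e.
- move=> D [s [A [us Js mA ->]]].
  have s_s0 i : i \in s -> i \notin s0.
    move=> iS; apply/negP => i0; move/allP: J0 => /(_ i i0) /=.
    by move/allP: Js => /(_ i iS) ->.
  pose A' i := if i \in s then A i else A0 i.
  have mA' i : measurable (A' i) by rewrite /A'; case: ifP.
  have -> : cylinder s A `&` E = cylinder (s ++ s0) A'.
    apply/seteqP; split => x.
      move=> [/in_cylinder h1 /in_cylinder h2]; apply/in_cylinder => i.
      by rewrite mem_cat /A'; case: ifP => [iS _|_ /= i0]; [exact: h1|exact: h2].
    move/in_cylinder => h; split; apply/in_cylinder => i iS.
      by have := h i; rewrite mem_cat iS /A' iS; apply.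
    have := h i; rewrite mem_cat iS orbT /A'.
    by case: ifP => [/s_s0|]; [rewrite iS|move=> _; apply].
  rewrite probability_cylinder //; last first.
    rewrite cat_uniq us u0 andbT /=; apply/hasPn => i i0; apply/negP => iS.
    by have := s_s0 i iS; rewrite i0.
  rewrite big_cat /= !probability_cylinder //.
  congr (_ * _)%E; apply: eq_big_seq => i iS; rewrite /A' ?iS //.
  by case: ifP => // /s_s0; rewrite iS.
- move=> S mS; exact: indep_setC (sigma_cylinders_sub mS) mE.
- move=> F mF tF; exact: indep_bigcup (fun n => sigma_cylinders_sub (mF n)) mE tF.
Qed.

End cylinder_independence.

Section process_combinatorics.
Context {R : realType} {T : Type}.
Variables (U : nat -> nat -> T -> R) (B Y : nat -> nat -> nat -> T -> R).
Variables (m : model) (beta : R).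

Lemma maxs_ub (x : R) s : x \in s -> x <= maxs s.
Proof.
elim: s => [//|a s IH]; rewrite inE => /orP[/eqP->|xs] /=; rewrite le_max.
  by rewrite lexx.
by rewrite IH ?orbT.
Qed.

Lemma flatten_map_nil (A : nat -> seq R) (s : seq nat) :
  (forall x, x \in s -> A x = [::]) -> flatten (map A s) = [::].
Proof.
elim: s => [//|a s IH] h /=; rewrite h ?mem_head // IH // => x xs.
by apply: h; rewrite inE xs orbT.
Qed.

Lemma step_eq_nil w t (pop : seq R) :
  (forall j, (j < size pop)%N -> noff U w t j (nth 0 pop j) = 0%N) ->
  step U B Y m beta w t pop = [::].
Proof.
move=> noff0; rewrite /step.
have -> : all_mutants U B Y beta w t pop = [::].
  rewrite /all_mutants indexedE -map_comp; apply: flatten_map_nil => j.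
  by rewrite mem_iota add0n => /andP[_ lt] /=; rewrite /mutants_of noff0.
have -> : all_clones U B beta w t pop = [::].
  rewrite /all_clones indexedE -map_comp; apply: flatten_map_nil => j.
  by rewrite mem_iota add0n => /andP[_ lt] /=; rewrite /nclones noff0.
by case: m.
Qed.

Lemma mem_all_mutants w t (pop : seq R) j : (j < size pop)%N ->
  (0 < noff U w t j (nth 0%R pop j))%N -> B t j 0%N w < beta ->
  Y t j 0%N w \in all_mutants U B Y beta w t pop.
Proof.
move=> js n0 b0; rewrite /all_mutants indexedE -map_comp.
apply/flatten_mapP; exists j; first by rewrite mem_iota.
rewrite /= /mutants_of; apply/mapP; exists 0%N => //.
by rewrite mem_filter /is_mutant b0 mem_iota.
Qed.

End process_combinatorics.

Lemma uniform_prob_lt (R : realType) (b : R) : 0 < b < 1 ->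
  uniform_prob (@ltr01 R) `]-oo, b[%classic = b%:E.
Proof.
move=> /andP[b0 b1].
rewrite /uniform_prob integral_uniform_pdf.
have -> : `]-oo, b[%classic `&` `[0, 1]%classic = `[0, b[%classic :> set R.
  apply/seteqP; split => x /=; rewrite !in_itv /=.
    by move=> [xb /andP[x0 _]]; rewrite x0 xb.
  by move=> /andP[x0 xb]; split => //; rewrite x0 /= (ltW (lt_trans xb b1)).
rewrite (eq_integral (fun _ => 1%:E)); last first.
  move=> x; rewrite inE /= in_itv /= => /andP[x0 xb].
  by rewrite /uniform_pdf x0 (ltW (lt_trans xb b1)) subr0 invr1.
rewrite integral_cst //= mul1e lebesgue_measure_itv /= lte_fin b0 -EFinD.
by rewrite oppr0 addr0.
Qed.

Lemma le0_of_le_expr (R : realType) (x r : R) : 0 <= r < 1 ->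
  (forall t, x <= r ^+ t) -> x <= 0.
Proof.
move=> /andP[r0 r1] xr.
apply: (cvgr_to_ge (cvg_expr (z := r) _)); first by rewrite ger0_norm.
by apply: nearW.
Qed.

Section bounded_survival.
Context {R : realType} {d : measure_display} {T : measurableType d}.
Variables (P : probability T R) (mu : probability R R) (beta f : R) (m : model)
  (U : nat -> nat -> T -> R) (B Y : nat -> nat -> nat -> T -> R).
Hypotheses (beta01 : 0 < beta < 1)
  (mu_tail_gt0 : forall x : R, 0 < x -> (0 < mu `]x, +oo[%classic)%E)
  (prim_law : model_primitives P mu U B Y).

Local Notation I := ((nat * nat) + (nat * nat * nat) + (nat * nat * nat))%type.
Local Notation X := (prim U B Y).

Lemma prim_indep : mutually_independent P X.
Proof. by case: prim_law. Qed.

(* The primitive variables used up to the offspring numbers of generation t: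
   these determine generations 0..t and W_0, ..., W_t. *)
Definition past (t : nat) : pred I := fun j =>
  match j with
  | inl (inl (s, _)) => (s <= t)%N
  | inl (inr (s, _, _)) | inr (s, _, _) => (s < t)%N
  end.

Local Notation Past t := (g_sigma_algebraType (cylinders X (past t))).

Lemma measurable_past_prim t j : past t j -> measurable_fun setT (X j : Past t -> R).
Proof.
move=> tj _ A mA; rewrite setTI; apply: sub_gen_smallest.
exists [:: j], (fun _ => A); split => //=; first by rewrite tj.
by rewrite cylinder_cons cylinder_nil setIT.
Qed.

Lemma measurable_until_past t s : (s <= t)%N ->
  measurable_until (U : nat -> nat -> Past t -> R) B Y s.
Proof.
move=> st; split => [s' i lt|s' i k lt].
  apply: (measurable_past_prim (j := inl (inl (s', i)))).
  exact: leq_trans (ltnW lt) st.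
split; first apply: (measurable_past_prim (j := inl (inr (s', i, k)))).
  exact: leq_trans lt st.
apply: (measurable_past_prim (j := inr (s', i, k))); exact: leq_trans lt st.
Qed.

Variable K : R.
Hypothesis K_gt0 : 0 < K.

Definition bounded_survival (t : nat) : set T := [set w | forall s, (s <= t)%N ->
  popsize U B Y m beta f w s <> 0%N /\ W U B Y m beta f w s <= K].

Definition first_parent (t j : nat) : set T := bounded_survival t `&` [set w |
  [/\ (j < popsize U B Y m beta f w t)%N,
      (0 < noff U w t j (nth 0%R (gen U B Y m beta f w t) j))%N &
      forall i, (i < j)%N -> noff U w t i (nth 0%R (gen U B Y m beta f w t) i) = 0%N]].

Definition big_mutant_base : I -> set R := fun i =>
  match i with
  | inl (inr _) => `]-oo, beta[%classic
  | inr _ => `]K, +oo[%classic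
  | _ => setT
  end.

(* The first offspring of individual j of generation t is a mutant of
   fitness > K (if it exists). *)
Definition big_mutant (t j : nat) : set T :=
  cylinder X [:: inl (inr (t, j, 0%N)); inr (t, j, 0%N)] big_mutant_base.

Lemma measurable_big_mutant_base i : measurable (big_mutant_base i).
Proof. by case: i => [[]|] * /=. Qed.

Lemma bounded_survival_past t : <<s cylinders X (past t) >> (bounded_survival t).
Proof.
change (@measurable _ (Past t) (bounded_survival t)).
have -> : bounded_survival t = \bigcap_s (if (s <= t)%N then
    [set w | popsize U B Y m beta f w s <> 0%N] `&` [set w | W U B Y m beta f w s <= K]
    else setT).
  apply/seteqP; split => w /=.
    by move=> h s _; case: ifP => // st; exact: h.
  by move=> h s st; have := h s Logic.I; rewrite st.
apply: bigcapT_measurable => s; case: ifP => st //.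
have [mgen _] : measurable_seqfun (fun w : Past t => gen U B Y m beta f w s).
  exact/measurable_seqfun_gen/measurable_until_past.
apply: measurableI; first exact: (measurable_natfun_preimage (fun n => n <> 0%N) mgen).
have mW : measurable_fun setT (fun w : Past t => W U B Y m beta f w s).
  exact/measurable_W/measurable_until_past.
exact: measurable_predfun_le mW (measurable_cst K).
Qed.

Lemma first_parent_past t j : <<s cylinders X (past t) >> (first_parent t j).
Proof.
change (@measurable _ (Past t) (first_parent t j)).
have [mgen mnth] : measurable_seqfun (fun w : Past t => gen U B Y m beta f w t).
  exact/measurable_seqfun_gen/measurable_until_past.
have mnoff i : measurable_natfun
    (fun w : Past t => noff U w t i (nth 0%R (gen U B Y m beta f w t) i)).
  apply: measurable_natfun_noff (mnth i).
  exact: (measurable_past_prim (j := inl (inl (t, i))) (leqnn t)).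
apply: measurableI; first exact: bounded_survival_past.
have -> : [set w | [/\ (j < popsize U B Y m beta f w t)%N,
      (0 < noff U w t j (nth 0%R (gen U B Y m beta f w t) j))%N &
      forall i, (i < j)%N -> noff U w t i (nth 0%R (gen U B Y m beta f w t) i) = 0%N]] =
    [set w | (j < popsize U B Y m beta f w t)%N] `&`
    [set w | (0 < noff U w t j (nth 0%R (gen U B Y m beta f w t) j))%N] `&`
    \bigcap_i (if (i < j)%N then
      [set w | noff U w t i (nth 0%R (gen U B Y m beta f w t) i) = 0%N] else setT).
  apply/seteqP; split => w /=.
    by move=> [h1 h2 h3]; split; [split|move=> i _; case: ifP => // ij; exact: h3].
  by move=> [[h1 h2] h3]; split => // i ij; have := h3 i Logic.I; rewrite ij.
apply: measurableI; first apply: measurableI.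
- exact: (measurable_predfun_natfun (fun n => j < n)%N mgen).
- exact: (measurable_predfun_natfun (fun n => 0 < n)%N (mnoff j)).
- by apply: bigcapT_measurable => i; case: ifP => // _; exact: mnoff.
Qed.

Lemma big_mutantE t j w : big_mutant t j w <-> B t j 0%N w < beta /\ K < Y t j 0%N w.
Proof.
rewrite /big_mutant; split.
  move/in_cylinder => h; split.
    by have := h (inl (inr (t, j, 0%N))); rewrite inE eqxx /= in_itv /=; apply.
  by have := h (inr (t, j, 0%N)); rewrite !inE eqxx orbT /= in_itv /= andbT; apply.
move=> [b0 y0]; apply/in_cylinder => i; rewrite !inE => /orP[]/eqP-> /=;
  by rewrite in_itv /= ?b0 ?y0.
Qed.

Lemma bounded_survival_succ_sub t :
  bounded_survival t.+1 `<=` \bigcup_j (first_parent t j `\` big_mutant t j).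
Proof.
move=> w surv.
have surv_t : bounded_survival t w by move=> s st; apply: surv; exact: leqW.
have [alive Wle] := surv t.+1 (leqnn _).
have ex : exists j, (j < size (gen U B Y m beta f w t))%N &&
    (0 < noff U w t j (nth 0%R (gen U B Y m beta f w t) j))%N.
  apply: contra_notP alive => noparent.
  rewrite /popsize /= step_eq_nil // => j js; apply/eqP; rewrite -leqn0 leqNgt.
  by apply/negP => np; apply: noparent; exists j; rewrite js np.
case: (ex_minnP ex) => j /andP[js nj] jmin.
exists j => //; split.
  split => //; split => // i ij; apply/eqP; rewrite -leqn0 leqNgt; apply/negP => ni.
  by have := jmin i; rewrite (ltn_trans ij js) ni => /(_ isT); rewrite leqNgt ij.
move/big_mutantE => [b0 y0].
have := maxs_ub (mem_all_mutants Y js nj b0).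
by move: Wle => /= /[swap] /(lt_le_trans y0); rewrite leNgt => ->.
Qed.

Lemma trivIset_first_parent t : trivIset setT (first_parent t).
Proof.
apply: ltn_trivIset => n k kn; apply/seteqP; split => // w.
by move=> [[_ [_ nk _]] [_ [_ _ /(_ k kn) nk0]]]; rewrite nk0 in nk.
Qed.

Definition big_mutant_prob := beta * fine (mu `]K, +oo[%classic).

Lemma probability_big_mutant t j : P (big_mutant t j) = big_mutant_prob%:E.
Proof.
case: prim_law => _ [_ [PB PY]].
rewrite /big_mutant (probability_cylinder prim_indep) //; last first.
  exact: measurable_big_mutant_base.
rewrite big_cons big_cons big_nil mule1 /=.
rewrite PB ?PY; [|exact: measurable_itv..].
rewrite uniform_prob_lt // /big_mutant_prob EFinM fineK //.
by rewrite fin_num_measure //; exact: measurable_itv.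
Qed.

Lemma big_mutant_prob_gt0 : 0 < big_mutant_prob.
Proof.
case/andP: beta01 => beta0 _; rewrite /big_mutant_prob mulr_gt0 // -lte_fin fineK.
  exact: mu_tail_gt0.
by rewrite fin_num_measure //; exact: measurable_itv.
Qed.

Lemma measurable_big_mutant t j : measurable (big_mutant t j).
Proof. exact: (measurable_cylinder prim_indep _ measurable_big_mutant_base). Qed.

Lemma big_mutant_prob_le1 : big_mutant_prob <= 1.
Proof.
by have := probability_le1 P (measurable_big_mutant 0 0); rewrite probability_big_mutant.
Qed.

Lemma measurable_first_parent t j : measurable (first_parent t j).
Proof. by apply: (sigma_cylinders_sub prim_indep); exact: first_parent_past. Qed.

Lemma measurable_bounded_survival t : measurable (bounded_survival t).
Proof. by apply: (sigma_cylinders_sub prim_indep); exact: bounded_survival_past. Qed.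

Lemma probability_first_parent_setD t j :
  P (first_parent t j `\` big_mutant t j) =
  ((1 - big_mutant_prob)%:E * P (first_parent t j))%E.
Proof.
have mD := measurable_first_parent t j; have mC := measurable_big_mutant t j.
have indep : P (first_parent t j `&` big_mutant t j) =
    (P (first_parent t j) * P (big_mutant t j))%E.
  apply: (sigma_cylinders_indep prim_indep (J := past t)) => //.
  - by rewrite /= ltnn.
  - exact: measurable_big_mutant_base.
  - exact: first_parent_past.
have -> : P (first_parent t j `\` big_mutant t j) =
    (P (first_parent t j) - P (first_parent t j `&` big_mutant t j))%E.
  have fD : (P (first_parent t j) < +oo)%E by rewrite (probability_fineK P mD) ltry.
  by rewrite measureD.
rewrite indep probability_big_mutant (probability_fineK P mD).
by rewrite -EFinM -EFinB -EFinM; congr EFin; ring.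
Qed.

Lemma bounded_survival_succ_le t :
  (P (bounded_survival t.+1) <= (1 - big_mutant_prob)%:E * P (bounded_survival t))%E.
Proof.
set F := fun j => first_parent t j `\` big_mutant t j.
have mF j : measurable (F j).
  exact: measurableD (measurable_first_parent t j) (measurable_big_mutant t j).
have tF : trivIset setT F.
  rewrite (_ : F = fun j => first_parent t j `&` ~` big_mutant t j).
    exact/trivIset_setIr/trivIset_first_parent.
  by apply/funext => j; rewrite /F setDE.
apply: le_trans (_ : (P (\bigcup_j F j) <= _)%E).
  apply: le_measure; rewrite ?inE; last exact: bounded_survival_succ_sub.
  - exact: measurable_bounded_survival.
  - exact: bigcupT_measurable.
have -> : P (\bigcup_j F j) =
    (\sum_(0 <= j <oo | j \in [set: nat])
       ((1 - big_mutant_prob)%:E * P (first_parent t j)))%E.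
  by rewrite measure_bigcup //; apply: eq_eseriesr => j _;
    exact: probability_first_parent_setD.
rewrite nneseriesZl //.
have <- : P (\bigcup_j first_parent t j) =
    (\sum_(0 <= j <oo | j \in [set: nat]) P (first_parent t j))%E.
  by rewrite measure_bigcup //; [move=> j _; exact: measurable_first_parent
                                |exact: trivIset_first_parent].
apply: lee_pmul => //; first by rewrite lee_fin subr_ge0 big_mutant_prob_le1.
apply: le_measure; rewrite ?inE; last by move=> w [j _ []].
- by apply: bigcupT_measurable => j; exact: measurable_first_parent.
- exact: measurable_bounded_survival.
Qed.

Lemma bounded_survival_le_expr t :
  (P (bounded_survival t) <= ((1 - big_mutant_prob) ^+ t)%:E)%E.
Proof.
elim: t => [|t IH].
  by rewrite expr0 probability_le1 //; exact: measurable_bounded_survival.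
apply: le_trans (bounded_survival_succ_le t) _.
rewrite exprS EFinM; apply: lee_pmul => //.
by rewrite lee_fin subr_ge0 big_mutant_prob_le1.
Qed.

Lemma negligible_survival_bounded : P.-negligible
  [set w | survives U B Y m beta f w /\ forall t, W U B Y m beta f w t <= K].
Proof.
have mA : measurable (\bigcap_t bounded_survival t).
  by apply: bigcapT_measurable => t; exact: measurable_bounded_survival.
exists (\bigcap_t bounded_survival t); split => //; last first.
  by move=> w [alive Wle] t _ s st; split; [exact: alive|exact: Wle].
rewrite (probability_fineK P mA); congr EFin; apply/le_anti.
rewrite fine_ge0 // andbT; apply: (@le0_of_le_expr _ _ (1 - big_mutant_prob)).
  by rewrite subr_ge0 big_mutant_prob_le1 /= ltrBlDr ltrDl big_mutant_prob_gt0.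
move=> t; rewrite -lee_fin -(probability_fineK P mA).
apply: le_trans (bounded_survival_le_expr t).
by apply: le_measure; rewrite ?inE //; [exact: measurable_bounded_survival|exact: bigcap_inf].
Qed.

End bounded_survival.

Theorem lemma1 (R : realType) (d : measure_display) (T : measurableType d)
  (P : probability T R) (mu : probability R R) (beta f : R) (m : model)
  (U : nat -> nat -> T -> R) (B Y : nat -> nat -> nat -> T -> R) :
  0 < beta < 1 -> 0 < f ->
  mu `]0, +oo[%classic = 1%E ->
  (forall x : R, 0 < x -> (0 < mu `]x, +oo[%classic)%E) ->
  model_primitives P mu U B Y ->
  P.-negligible [set w | survives U B Y m beta f w /\
                         exists M : R, forall t, W U B Y m beta f w t <= M].
Proof.
move=> beta01 _ _ mu_tail_gt0 prim_law.
apply: (@negligibleS _ _ _ P (\bigcup_n [set w | survives U B Y m beta f w /\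
           forall t, W U B Y m beta f w t <= n.+1%:R])).
  move=> w [alive [M WleM]].
  have M0 : 0 <= Num.max M 0 by rewrite le_max lexx orbT.
  exists (Num.Def.archi_bound (Num.max M 0)) => //; split => // t.
  apply: le_trans (WleM t) (le_trans (_ : M <= Num.max M 0) _).
    by rewrite le_max lexx.
  by apply/ltW/(lt_le_trans (archi_boundP M0)); rewrite ler_nat.
apply: negligible_bigcup => n.
apply: (negligible_survival_bounded f m beta01 mu_tail_gt0 prim_law).
exact: ltr0Sn.
Qed.
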